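(* Let $\Lambda\colon L\times W\to[0,\infty]$ and $\Lambda'\colon L'\times W'\to[0,\infty]$ be Dowker dissimilarities that are $(\alpha,\alpha')$-interleaved (as Dowker dissimilarities). Then the Dowker nerves $N\Lambda$ and $N\Lambda'$ are $(\alpha,\alpha')$-interleaved filtered simplicial complexes.
   Context: A Dowker dissimilarity is a function $\Lambda\colon L\times W\to[0,\infty]$ for sets $L,W$. Its Dowker nerve $N\Lambda$ is the filtered simplicial complex with vertex set $L$ whose level $t\in[0,\infty]$ is $N\Lambda_t=\{\text{finite }\sigma\subseteq L\mid \exists w\in W \text{ with }\Lambda(l,w)<t\ \forall l\in\sigma\}$. Let $\alpha,\alpha'\colon[0,\infty]\to[0,\infty]$ be order preserving with $t\le\alpha(t)$, $t\le\alpha'(t)$ for all $t$. An $(\alpha,\alpha')$-interleaving of Dowker dissimilarities $\Lambda,\Lambda'$ is a pair of relations $C\subseteq L\times L'$, $C'\subseteq L'\times L$ such that: (i) for every $t$ and every nonempty $\sigma\in N\Lambda_t$, the set $C(\sigma)=\{l'\mid\exists l\in\sigma,(l,l')\in C\}$ is finite, nonempty and lies in $N\Lambda'_{\alpha(t)}$; (ii) for every $t$ and every nonempty $\tau\in N\Lambda'_t$, $C'(\tau)$ is finite, nonempty and lies in $N\Lambda_{\alpha'(t)}$; (iii) $\Delta_L\subseteq C'\circ C$ and $\Delta_{L'}\subseteq C\circ C'$, where $C'\circ C=\{(l,m)\mid\exists l':(l,l')\in C,(l',m)\in C'\}$ and $\Delta$ denotes the diagonal. Filtered simplicial complexes $K,K'$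 (i.e. $K(s)\subseteq K(t)$ subcomplexes for $s\le t$) are $(\alpha,\alpha')$-interleaved if there are continuous maps $F_t\colon|K(t)|\to|K'(\alpha(t))|$ and $G_t\colon|K'(t)|\to|K(\alpha'(t))|$ for all $t$ ($|\cdot|$ = geometric realization) such that for $s\le t$, $F_t$ composed with the inclusion $|K(s)|\to|K(t)|$ is homotopic to $F_s$ composed with the inclusion $|K'(\alpha(s))|\to|K'(\alpha(t))|$ (and likewise for $G$), $G_{\alpha(t)}\circ F_t$ is homotopic to the inclusion $|K(t)|\to|K(\alpha'(\alpha(t)))|$, and $F_{\alpha'(t)}\circ G_t$ is homotopic to the inclusion $|K'(t)|\to|K'(\alpha(\alpha'(t)))|$. *)

From HB Require Import structures.
From mathcomp Require Import all_boot all_order all_algebra.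
From mathcomp Require Import all_classical all_reals.
From mathcomp Require Import topology normedtype.
Import numFieldNormedType.Exports.
Set Implicit Arguments. Unset Strict Implicit. Unset Printing Implicit Defensive.
Import Order.TTheory GRing.Theory Num.Theory.
Local Open Scope classical_set_scope.
Local Open Scope ring_scope.

Section Realization.
Variables (R : realType) (V : Type).

Definition supp (x : V -> R) : set V := [set v | x v != 0].

Definition in_real (K : set (set V)) (x : V -> R) : Prop :=
  [/\ forall v, 0 <= x v, finite_set (supp x), K (supp x) &
      \sum_(v \in (supp x : set {classic V})) x v = 1].

Definition real_pt (K : set (set V)) := {classic {x : V -> R | in_real K x}}.

Section Weak.
Variable K : set (set V).

(* the coherent ("weak") topology: U is open iff for every simplex s of K,
   U meets the closed simplex |s| in a set open for the Euclidean topology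
   of |s| (here expressed by the sup-norm on the finitely many coordinates). *)
Definition weak_open (U : set (real_pt K)) : Prop :=
  forall (s : set V), K s -> forall x : real_pt K, U x -> supp (sval x) `<=` s ->
  exists2 e : R, 0 < e & forall y : real_pt K, supp (sval y) `<=` s ->
    (forall v, s v -> `|sval y v - sval x v| < e) -> U y.

Lemma weak_openT : weak_open setT.
Proof. by move=> s _ x _ _; exists 1 => //. Qed.

Lemma weak_openI : setI_closed weak_open.
Proof.
move=> A B oA oB s Ks x [Ax Bx] sx.
have [e1 e10 h1] := oA s Ks x Ax sx.
have [e2 e20 h2] := oB s Ks x Bx sx.
exists (Num.min e1 e2); first by rewrite lt_min e10 e20.
move=> y sy hy; split.
- by apply: h1 => // v sv; have := hy v sv; rewrite lt_min => /andP[].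
- by apply: h2 => // v sv; have := hy v sv; rewrite lt_min => /andP[].
Qed.

Lemma weak_open_bigU (I : Type) (f : I -> set (real_pt K)) :
  (forall i, weak_open (f i)) -> weak_open (\bigcup_i f i).
Proof.
move=> hf s Ks x [i _ fxi] sx.
have [e e0 h] := hf i s Ks x fxi sx.
by exists e => // y sy hy; exists i => //; apply: h.
Qed.

HB.instance Definition _ := Choice.on (real_pt K).
HB.instance Definition _ :=
  isOpenTopological.Build (real_pt K) weak_openT weak_openI weak_open_bigU.

End Weak.

Definition incl (K1 K2 : set (set V)) (h : K1 `<=` K2) :
    real_pt K1 -> real_pt K2 :=
  fun x => exist (in_real K2) (sval x)
    (let: And4 a b c d := svalP x in And4 a b (h _ c) d).

End Realization.

Definition homotopic (R : realType) (X Y : topologicalType) (f g : X -> Y) : Prop :=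
  exists H : (X * R)%type -> Y,
    [/\ {within ([set: X] `*` `[0%R, 1%R] : set (X * R)%type), continuous H},
        forall x, H (x, 0%R) = f x & forall x, H (x, 1%R) = g x].

Record filtered (R : realType) (V : Type) := Filtered {
  fc :> \bar R -> set (set V);
  fc_fin : forall t s, fc t s -> finite_set s;
  fc_down : forall t s s', fc t s -> s' `<=` s -> fc t s';
  fc_mono : forall (t u : \bar R), (t <= u)%E -> fc t `<=` fc u }.

Definition fc_interleaved (R : realType) (V V' : Type)
  (alpha alpha' : \bar R -> \bar R)
  (ha : forall t, (t <= alpha t)%E) (ha' : forall t, (t <= alpha' t)%E)
  (ma : forall s t, (s <= t)%E -> (alpha s <= alpha t)%E)
  (ma' : forall s t, (s <= t)%E -> (alpha' s <= alpha' t)%E)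
  (K : filtered R V) (K' : filtered R V') : Prop :=
  exists (F : forall t, real_pt R (K t) -> real_pt R (K' (alpha t)))
         (G : forall t, real_pt R (K' t) -> real_pt R (K (alpha' t))),
  (forall t, continuous (F t)) /\ (forall t, continuous (G t)) /\
  [/\ 
      forall s t (h : (s <= t)%E),
        homotopic R (F t \o incl (@fc_mono _ _ K _ _ h))
                    (incl (@fc_mono _ _ K' _ _ (ma s t h)) \o F s),
      forall s t (h : (s <= t)%E),
        homotopic R (G t \o incl (@fc_mono _ _ K' _ _ h))
                    (incl (@fc_mono _ _ K _ _ (ma' s t h)) \o G s),
      (forall t, homotopic R (G (alpha t) \o F t)
                    (incl (@fc_mono _ _ K _ _ (le_trans (ha t) (ha' (alpha t)))))) &
      (forall t, homotopic R (F (alpha' t) \o G t)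
                    (incl (@fc_mono _ _ K' _ _ (le_trans (ha' t) (ha (alpha' t))))))].

Definition dnerve (R : realType) (L W : Type) (Lam : L -> W -> \bar R)
  (t : \bar R) : set (set L) :=
  [set s | finite_set s /\ exists w, forall l, s l -> (Lam l w < t)%E].

Lemma dnerve_fin (R : realType) (L W : Type) (Lam : L -> W -> \bar R) t s :
  dnerve Lam t s -> finite_set s.
Proof. by case. Qed.

Lemma dnerve_down (R : realType) (L W : Type) (Lam : L -> W -> \bar R) t s s' :
  dnerve Lam t s -> s' `<=` s -> dnerve Lam t s'.
Proof.
move=> [fs [w hw]] ss; split; first exact: sub_finite_set fs.
by exists w => l /ss; apply: hw.
Qed.

Lemma dnerve_mono (R : realType) (L W : Type) (Lam : L -> W -> \bar R)
  (t u : \bar R) : (t <= u)%E -> dnerve Lam t `<=` dnerve Lam u.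
Proof.
move=> tu s [fs [w hw]]; split => //; exists w => l /hw h.
exact: lt_le_trans h tu.
Qed.

Definition Dowker_nerve (R : realType) (L W : Type) (Lam : L -> W -> \bar R) :
  filtered R L :=
  Filtered (@dnerve_fin R L W Lam) (@dnerve_down R L W Lam)
           (@dnerve_mono R L W Lam).

Definition rimage (A B : Type) (C : A -> B -> Prop) (s : set A) : set B :=
  [set b | exists2 a, s a & C a b].

Definition dowker_interleaving (R : realType) (L W L' W' : Type)
  (alpha alpha' : \bar R -> \bar R)
  (Lam : L -> W -> \bar R) (Lam' : L' -> W' -> \bar R)
  (C : L -> L' -> Prop) (C' : L' -> L -> Prop) : Prop :=
  [/\ forall t s, dnerve Lam t s -> s !=set0 ->
        [/\ finite_set (rimage C s), rimage C s !=set0 &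
            dnerve Lam' (alpha t) (rimage C s)],
      forall t s, dnerve Lam' t s -> s !=set0 ->
        [/\ finite_set (rimage C' s), rimage C' s !=set0 &
            dnerve Lam (alpha' t) (rimage C' s)],
      (forall l, exists l', C l l' /\ C' l' l) &
      (forall l', exists l, C' l' l /\ C l l')].

Definition dowker_interleaved (R : realType) (L W L' W' : Type)
  (alpha alpha' : \bar R -> \bar R)
  (Lam : L -> W -> \bar R) (Lam' : L' -> W' -> \bar R) : Prop :=
  exists C C', dowker_interleaving alpha alpha' Lam Lam' C C'.

(** The interleaving relations contain graphs of vertex maps [f : L -> L'] and
    [g : L' -> L] with [C' (f l) l] and [C (g l') l'].  A vertex map sending
    simplices into simplices induces a continuous map of geometric
    realisations (push the barycentric coordinates forward), and two such
    maps are homotopic by the straight-line homotopy as soon as they are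
    contiguous: the images of every simplex lie in a common simplex.  The
    interleaving conditions say exactly that the maps [F_t] induced by [f]
    commute with the inclusions up to contiguity, and that [g \o f] is
    contiguous to the identity, since [f] followed by [g] stays inside
    [C' (C sigma)], a simplex of the nerve containing [sigma]. *)
From Pilot Require Import Defs.
From mathcomp Require Import all_boot all_order all_algebra.
From mathcomp Require Import all_classical all_reals.
From mathcomp Require Import topology normedtype.
From mathcomp Require Import lra.

Import numFieldNormedType.Exports.
Set Implicit Arguments. Unset Strict Implicit. Unset Printing Implicit Defensive.
Import Order.TTheory GRing.Theory Num.Theory.
Local Open Scope classical_set_scope.
Local Open Scope ring_scope.

Lemma notin_supp (R : realType) (V : Type) (x : V -> R) u : ~ supp x u -> x u = 0.
Proof. by rewrite /supp /= => /negP; rewrite negbK => /eqP. Qed.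

Lemma fsum_supp_widen (R : realType) (T : Type) (a : T -> R) (A : set T) :
  finite_set A -> supp a `<=` A ->
  \sum_(v \in (A : set {classic T})) a v = \sum_(v \in (supp a : set {classic T})) a v.
Proof.
by move=> fA aA; apply/esym/fsbig_widen => // v [_ nv]; exact: notin_supp.
Qed.

Section RealPoint.
Variables (R : realType) (V : Type) (K : set (set V)).

Lemma real_pt_inj : injective (fun x : real_pt R K => sval x).
Proof.
by case=> [a ha] [b hb] /= eab; subst b; congr exist; exact: Prop_irrelevance.
Qed.

Lemma real_pt_simplex (x : real_pt R K) : K (supp (sval x)).
Proof. by case: (svalP x). Qed.

Lemma real_pt_supp_neq0 (x : real_pt R K) : supp (sval x) !=set0.
Proof.
case: x => x [_ _ _ hs] /=; apply/set0P/eqP => e.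
by move: hs; rewrite e fsbig_set0 => /eqP; rewrite eq_sym oner_eq0.
Qed.

Lemma real_pt_ge0_le1 (x : real_pt R K) v : 0 <= sval x v <= 1.
Proof.
case: x => x [h0 hf _ hs] /=; rewrite h0 /=.
have [sv|nsv] := pselect (supp x v); last by rewrite (notin_supp nsv) ler01.
rewrite -hs (fsbigD1 (v : {classic V})) //= lerDl.
by apply: fsumr_ge0 => i _; exact: h0.
Qed.

End RealPoint.

Section Pushforward.
Variables (R : realType) (V V' : Type) (h : V -> V').

Definition push (x : V -> R) : V' -> R := fun v =>
  \sum_(u \in (supp x : set {classic V})) (if `[< h u = v >] then x u else 0).

Lemma supp_push x : supp (push x) `<=` h @` supp x.
Proof.
move=> v pv; apply: contrapT => nv; move: pv; rewrite /supp /= /push fsbig1 ?eqxx //.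
by move=> u su; case: asboolP => // e; exfalso; apply: nv; exists u.
Qed.

Lemma push_ge0 x : (forall u, 0 <= x u) -> forall v, 0 <= push x v.
Proof. by move=> h0 v; apply: fsumr_ge0 => u _; case: asboolP. Qed.

Lemma push_sum x : finite_set (supp x) ->
  \sum_(v \in (supp (push x) : set {classic V'})) push x v =
  \sum_(u \in (supp x : set {classic V})) x u.
Proof.
move=> fx; have fhx : finite_set (h @` supp x : set {classic V'}).
  exact: finite_image.
rewrite (fsbig_widen _ (h @` supp x : set {classic V'})) //; first last.
- by move=> v [_ nv]; exact: notin_supp.
- exact: supp_push.
rewrite /push exchange_fsbig //; apply: eq_fsbigr => u; rewrite inE => su.
rewrite (fsbigD1 (h u : {classic V'})) //=; last by exists u.
rewrite fsbig1 ?addr0; first by case: asboolP.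
by move=> v [_ /= nv]; case: asboolP => // e; exfalso; apply: nv; rewrite e.
Qed.

Lemma in_real_push (K : set (set V)) (K' : set (set V')) x :
  in_real K x -> K' (supp (push x)) -> in_real K' (push x).
Proof.
case=> h0 hf _ hs hK; split => //; first exact: push_ge0.
  exact: sub_finite_set (@supp_push x) (finite_image _ hf).
by rewrite push_sum.
Qed.

Lemma push_on (s : set {classic V}) x v : finite_set s -> supp x `<=` s ->
  push x v = \sum_(u \in s) (if `[< h u = v >] then x u else 0).
Proof.
move=> fs sx; apply: fsbig_widen => // u [_ nu] /=.
by rewrite (notin_supp nu); case: asboolP.
Qed.

Lemma push_dist_le (s : set {classic V}) (x y : V -> R) (d : R) v :
  finite_set s -> supp x `<=` s -> supp y `<=` s ->
  (forall u, s u -> `|y u - x u| <= d) ->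
  `|push y v - push x v| <= d * \sum_(u \in s) (1 : R).
Proof.
move=> fs sx sy hd; rewrite (push_on v fs sx) (push_on v fs sy) mulr_fsumr.
rewrite !fsbig_finite // -sumrB; apply: le_trans (ler_norm_sum _ _ _) _.
rewrite big_seq [leRHS]big_seq; apply: ler_sum => u.
rewrite in_fset_set // inE mulr1 => su.
case: asboolP => _; first exact: hd.
by rewrite subrr normr0; apply: le_trans (hd u su).
Qed.

End Pushforward.

Section SimplexwiseContinuity.
Variables (R : realType) (V V' : Type) (K : set (set V)) (K' : set (set V')).

Definition simplexwise_continuous (phi : real_pt R K -> real_pt R K') :=
  forall s, K s -> forall x : real_pt R K, supp (sval x) `<=` s ->
  forall e : R, 0 < e -> exists2 d : R, 0 < d &
  forall y : real_pt R K, supp (sval y) `<=` s ->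
    (forall u, s u -> `|sval y u - sval x u| < d) ->
    forall v, `|sval (phi y) v - sval (phi x) v| < e.

Definition contiguous (phi0 phi1 : real_pt R K -> real_pt R K') :=
  forall s, K s -> s !=set0 -> exists2 s', K' s' &
  forall x : real_pt R K, supp (sval x) `<=` s ->
    supp (sval (phi0 x)) `|` supp (sval (phi1 x)) `<=` s'.

Lemma continuous_simplexwise (phi : real_pt R K -> real_pt R K') :
  simplexwise_continuous phi -> contiguous phi phi -> continuous phi.
Proof.
move=> hc hs; apply/continuousP => U oU.
suff : weak_open (phi @^-1` U) by [].
have {}oU : weak_open U := oU.
move=> s Ks x Ux sx.
have [s' Ks' hss] := hs s Ks (subset_nonempty sx (real_pt_supp_neq0 x)).
have carried y : supp (sval y) `<=` s -> supp (sval (phi y)) `<=` s'.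
  by move/hss; rewrite setUid.
have [e e0 he] := oU s' Ks' (phi x) Ux (carried x sx).
have [d d0 hd] := hc s Ks x sx e e0.
by exists d => // y sy hy; apply: he => [|v _]; [exact: carried | exact: hd].
Qed.

Lemma simplexwise_continuous_push (h : V -> V') (phi : real_pt R K -> real_pt R K') :
  (forall s, K s -> finite_set s) ->
  (forall x, sval (phi x) = push h (sval x)) -> simplexwise_continuous phi.
Proof.
move=> hfin hphi s Ks x sx e e0.
pose n := \sum_(u \in (s : set {classic V})) (1 : R).
have n0 : 0 <= n by apply: fsumr_ge0.
exists (e / (n + 1)); first by rewrite divr_gt0 // ltr_wpDl.
move=> y sy hy v; rewrite !hphi.
have hy' u : s u -> `|sval y u - sval x u| <= e / (n + 1) by move/hy/ltW.
apply: le_lt_trans (push_dist_le h v (hfin s Ks) sx sy hy') _.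
rewrite -/n mulrAC ltr_pdivrMr ?ltr_wpDl // ltr_pM2l //; lra.
Qed.

End SimplexwiseContinuity.

Lemma simplexwise_continuous_incl (R : realType) (V : Type) (K K' : set (set V))
  (i : K `<=` K') : simplexwise_continuous (Defs.incl (R := R) i).
Proof.
move=> s Ks x sx e e0; exists e => // y sy hy v /=.
have [sv|nsv] := pselect (s v); first exact: hy.
rewrite (notin_supp (fun h => nsv (sx _ h))) (notin_supp (fun h => nsv (sy _ h))).
by rewrite subrr normr0.
Qed.

Lemma simplexwise_continuous_comp (R : realType) (V1 V2 V3 : Type)
  (K1 : set (set V1)) (K2 : set (set V2)) (K3 : set (set V3))
  (phi : real_pt R K1 -> real_pt R K2) (psi : real_pt R K2 -> real_pt R K3) :
  simplexwise_continuous phi -> contiguous phi phi ->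
  simplexwise_continuous psi -> simplexwise_continuous (psi \o phi).
Proof.
move=> hphi hs hpsi s Ks x sx e e0.
have [s' Ks' hss] := hs s Ks (subset_nonempty sx (real_pt_supp_neq0 x)).
have carried y : supp (sval y) `<=` s -> supp (sval (phi y)) `<=` s'.
  by move/hss; rewrite setUid.
have [d1 d10 hd1] := hpsi s' Ks' (phi x) (carried x sx) e e0.
have [d d0 hd] := hphi s Ks x sx d1 d10.
by exists d => // y sy hy; apply: hd1 => [|u _]; [exact: carried | exact: hd].
Qed.

Section Clamp.
Variable R : realFieldType.

Definition clamp (r : R) : R := Num.max 0 (Num.min r 1).

Lemma clampE r : clamp r = if r < 0 then 0 else if r < 1 then r else 1.
Proof.
rewrite /clamp /Num.max /Num.min /Order.max /Order.min.
by case: (ltP r 1) => h1; case: (ltP r 0) => h0 /=; try (case: ifP => /=; lra); lra.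
Qed.

Lemma clamp_ge0_le1 r : 0 <= clamp r <= 1.
Proof. by rewrite clampE; case: ltP => h1; [lra|case: ltP => h2; lra]. Qed.

Lemma clamp_dist_le r r' : `|clamp r - clamp r'| <= `|r - r'|.
Proof.
rewrite !clampE; case: (ltP r 0) => h1; case: (ltP r 1) => h2;
 case: (ltP r' 0) => h3; case: (ltP r' 1) => h4;
 (case: (leP 0 (r - r')) => h5; [rewrite (ger0_norm h5) | rewrite (ltr0_norm h5)]);
 rewrite /= ?ler_norml; try (apply/andP; split); lra.
Qed.

Lemma clamp0 : clamp 0 = 0.
Proof. by rewrite clampE ltxx ltr01. Qed.

Lemma clamp1 : clamp 1 = 1.
Proof. by rewrite clampE ltxx ltNge ler01. Qed.

End Clamp.

Lemma lerp_dist_lt (R : realFieldType) (a b a' b' c c' e : R) :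
  0 <= a <= 1 -> 0 <= b <= 1 -> 0 <= c <= 1 -> 0 <= c' <= 1 ->
  `|a' - a| < e -> `|b' - b| < e -> `|c' - c| < e ->
  `|((1 - c') * a' + c' * b') - ((1 - c) * a + c * b)| < 3 * e.
Proof.
move=> /andP[? ?] /andP[? ?] /andP[? ?] /andP[? ?].
rewrite !ltr_norml => /andP[? ?] /andP[? ?] /andP[? ?].
by apply/andP; split; nra.
Qed.

Section StraightLineHomotopy.
Variables (R : realType) (V V' : Type) (K : set (set V)) (K' : set (set V')).
Variables phi0 phi1 : real_pt R K -> real_pt R K'.
Hypothesis K'_down : forall s s', K' s -> s' `<=` s -> K' s'.
Hypothesis phi01 : contiguous phi0 phi1.
Hypothesis phi0_cont : simplexwise_continuous phi0.
Hypothesis phi1_cont : simplexwise_continuous phi1.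

(* Clamping the time parameter makes the homotopy defined, and continuous,
   on all of [R]. *)
Definition straight (r : R) (a b : V' -> R) : V' -> R :=
  fun v => (1 - clamp r) * a v + clamp r * b v.

Lemma supp_straight r a b : supp (straight r a b) `<=` supp a `|` supp b.
Proof.
move=> v; apply: contraPP => /not_orP [ha hb].
by rewrite /supp /straight /= (notin_supp ha) (notin_supp hb) !mulr0 addr0 eqxx.
Qed.

Lemma fsum_straight r a b : finite_set (supp a) -> finite_set (supp b) ->
  \sum_(v \in (supp (straight r a b) : set {classic V'})) straight r a b v =
  (1 - clamp r) * \sum_(v \in (supp a : set {classic V'})) a v +
  clamp r * \sum_(v \in (supp b : set {classic V'})) b v.
Proof.
move=> fa fb; have fab : finite_set (supp a `|` supp b) by rewrite finite_setU.
rewrite -(fsum_supp_widen fab (@supp_straight r a b)) fsbig_split //=.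
by rewrite -!mulr_fsumr !fsum_supp_widen.
Qed.

Lemma in_real_straight (x : real_pt R K) r :
  in_real K' (straight r (sval (phi0 x)) (sval (phi1 x))).
Proof.
have [c0 c1] : 0 <= clamp r /\ clamp r <= 1 by apply/andP; exact: clamp_ge0_le1.
have [a0 afin _ a1] := svalP (phi0 x); have [b0 bfin _ b1] := svalP (phi1 x).
have [s' Ks' hss] := phi01 (real_pt_simplex x) (real_pt_supp_neq0 x).
split.
- by move=> v; rewrite addr_ge0 // mulr_ge0 // subr_ge0.
- by apply: sub_finite_set (@supp_straight r _ _) _; rewrite finite_setU.
- exact: K'_down Ks' (subset_trans (@supp_straight r _ _) (hss x (@subset_refl _ _))).
- by rewrite fsum_straight // a1 b1 !mulr1 subrK.
Qed.

Definition straight_homotopy (p : real_pt R K * R) : real_pt R K' :=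
  exist _ _ (in_real_straight p.1 p.2).

Lemma supp_straight_homotopy (y : real_pt R K) r (s : set V) (s' : set V') :
  (forall x : real_pt R K, supp (sval x) `<=` s ->
    supp (sval (phi0 x)) `|` supp (sval (phi1 x)) `<=` s') ->
  supp (sval y) `<=` s -> supp (sval (straight_homotopy (y, r))) `<=` s'.
Proof. by move=> hss sy; apply: subset_trans (hss y sy); exact: supp_straight. Qed.

Lemma straight_homotopy_dist_lt (x y : real_pt R K) r r' e :
  (forall v, `|sval (phi0 y) v - sval (phi0 x) v| < e) ->
  (forall v, `|sval (phi1 y) v - sval (phi1 x) v| < e) -> `|r' - r| < e ->
  forall v, `|sval (straight_homotopy (y, r')) v -
              sval (straight_homotopy (x, r)) v| < 3 * e.
Proof.
move=> h0 h1 hr v; apply: lerp_dist_lt; rewrite ?clamp_ge0_le1 ?real_pt_ge0_le1 //.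
exact: le_lt_trans (clamp_dist_le _ _) hr.
Qed.

Lemma straight_homotopy_near (U : set (real_pt R K')) : weak_open U ->
  forall s, K s -> forall x : real_pt R K, supp (sval x) `<=` s ->
  forall r, U (straight_homotopy (x, r)) ->
  exists2 d : R, 0 < d & forall (y : real_pt R K) r', supp (sval y) `<=` s ->
    (forall u, s u -> `|sval y u - sval x u| < d) -> `|r' - r| < d ->
    U (straight_homotopy (y, r')).
Proof.
move=> oU s Ks x sx r Ux.
have [s' Ks' hss] := phi01 Ks (subset_nonempty sx (real_pt_supp_neq0 x)).
have [e e0 he] := oU s' Ks' _ Ux (supp_straight_homotopy (r := r) hss sx).
have e3 : 0 < e / 3 by rewrite divr_gt0.
have [d0 d00 hd0] := phi0_cont Ks sx e3.
have [d1 d10 hd1] := phi1_cont Ks sx e3.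
exists (Num.min (e / 3) (Num.min d0 d1)); first by rewrite !lt_min e3 d00 d10.
move=> y r' sy hy hr; apply: he => [|v _]; first exact: supp_straight_homotopy hss sy.
have -> : e = 3 * (e / 3) by rewrite mulrC divfK // pnatr_eq0.
apply: straight_homotopy_dist_lt => [w|w|].
- by apply: hd0 => // u /hy; rewrite !lt_min => /and3P[].
- by apply: hd1 => // u /hy; rewrite !lt_min => /and3P[].
- by move: hr; rewrite !lt_min => /and3P[].
Qed.

(* The tube lemma, for the compact segment [[r0 - rho, r0 + rho]]. *)
Lemma straight_homotopy_tube (U : set (real_pt R K')) (r0 rho : R) :
  weak_open U ->
  weak_open [set x | forall r, `[r0 - rho, r0 + rho]%classic r -> U (straight_homotopy (x, r))].
Proof.
move=> oU s Ks x Ox sx.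
pose D (d : R) := [set y : real_pt R K | supp (sval y) `<=` s /\
  forall u, s u -> `|sval y u - sval x u| < d].
pose F := filter_from [set d : R | 0 < d] D.
have FF : Filter F.
  apply: filter_from_filter => [|i j i0 j0]; first by exists 1; exact: ltr01.
  exists (Num.min i j); first by rewrite /= lt_min i0 j0.
  move=> y [sy hy]; split; split => // u /hy; by rewrite lt_min => /andP[].
have cover r : `[r0 - rho, r0 + rho]%classic r ->
    \forall r' \near r & y \near F, U (straight_homotopy (y, r')).
  move=> /Ox Ur; have [d d0 hd] := straight_homotopy_near oU Ks sx Ur.
  exists (ball r d, D d); first by split; [exact: nbhsx_ballx | exists d].
  move=> [r' y] [/= rr' [sy hy]]; apply: hd => //.
  by move: rr'; rewrite -ball_normE /ball_ /= distrC.
have [d d0 hd] := (compact_near_coveringP _).1 (@segment_compact R _ _) _ F _ FF cover.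
by exists d => // y sy hy; apply: (hd y); split.
Qed.

Lemma continuous_straight_homotopy : continuous straight_homotopy.
Proof.
apply/continuousP => U oU; rewrite openE => -[x0 r0] /= Ux0.
have {}oU : weak_open U := oU.
have [d d0 hd] := straight_homotopy_near oU (real_pt_simplex x0) (@subset_refl _ _) Ux0.
have rho0 : 0 < d / 2 by rewrite divr_gt0.
exists ([set x | forall r, `[r0 - d / 2, r0 + d / 2]%classic r -> U (straight_homotopy (x, r))],
        ball r0 (d / 2)) => [|[x r] [/= Ox]]; first split => /=.
- apply: open_nbhs_nbhs; split; first exact: straight_homotopy_tube.
  move=> r; rewrite /= in_itv /= => /andP[r1 r2]; apply: hd => //.
    by move=> u _; rewrite subrr normr0.
  by rewrite ltr_norml; apply/andP; split; lra.
- exact: nbhsx_ballx.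
rewrite -ball_normE /ball_ /= ltr_norml => /andP[r1 r2]; apply: Ox.
by rewrite /= in_itv /=; apply/andP; split; lra.
Qed.

Lemma contiguous_homotopic : homotopic R phi0 phi1.
Proof.
exists straight_homotopy; split.
- exact/continuous_subspaceT/continuous_straight_homotopy.
- move=> x; apply: real_pt_inj; apply: funext => v.
  by rewrite /= /straight clamp0 subr0 mul1r mul0r addr0.
- move=> x; apply: real_pt_inj; apply: funext => v.
  by rewrite /= /straight clamp1 subrr mul0r mul1r add0r.
Qed.
End StraightLineHomotopy.

Section SimplicialMap.
Variables (R : realType) (V V' : Type) (K : set (set V)) (K' : set (set V')).
Variable h : V -> V'.
Hypothesis K_fin : forall s, K s -> finite_set s.
Hypothesis K'_down : forall s s', K' s -> s' `<=` s -> K' s'.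
Hypothesis h_simplicial :
  forall s, K s -> s !=set0 -> exists2 s', K' s' & h @` s `<=` s'.

Lemma in_real_simplicial_map (x : real_pt R K) : in_real K' (push h (sval x)).
Proof.
apply: in_real_push; first exact: svalP.
have [s' Ks' hs'] := h_simplicial (real_pt_simplex x) (real_pt_supp_neq0 x).
by apply: K'_down Ks' _; apply: subset_trans hs'; exact: supp_push.
Qed.

Definition simplicial_map (x : real_pt R K) : real_pt R K' :=
  exist _ _ (in_real_simplicial_map x).

Lemma simplexwise_continuous_simplicial_map : simplexwise_continuous simplicial_map.
Proof. exact: simplexwise_continuous_push. Qed.

Lemma contiguous_simplicial_map : contiguous simplicial_map simplicial_map.
Proof.
move=> s Ks s0; have [s' Ks' hs'] := h_simplicial Ks s0.
exists s' => // x sx; rewrite setUid => v pv; have [u su <-] := supp_push pv.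
by apply: hs'; exists u => //; exact: sx.
Qed.

Lemma continuous_simplicial_map : continuous simplicial_map.
Proof.
exact: continuous_simplexwise simplexwise_continuous_simplicial_map
  contiguous_simplicial_map.
Qed.

End SimplicialMap.

Section DowkerMap.
Variables (R : realType) (L W L' W' : Type).
Variables (Lam : L -> W -> \bar R) (Lam' : L' -> W' -> \bar R).
Variables (alpha : \bar R -> \bar R) (C : L -> L' -> Prop) (f : L -> L').
Hypothesis C_nerve : forall t s, dnerve Lam t s -> s !=set0 ->
  dnerve Lam' (alpha t) (rimage C s).
Hypothesis f_in_C : forall l, C l (f l).

Lemma dowker_vertex_map_simplicial t s : dnerve Lam t s -> s !=set0 ->
  exists2 s', dnerve Lam' (alpha t) s' & f @` s `<=` s'.
Proof.
move=> Ks s0; exists (rimage C s); first exact: C_nerve.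
by move=> _ [u su <-]; exists u.
Qed.

Definition dowker_map t :
    real_pt R (dnerve Lam t) -> real_pt R (dnerve Lam' (alpha t)) :=
  simplicial_map (@dnerve_down R L' W' Lam' (alpha t))
    (@dowker_vertex_map_simplicial t).

Lemma simplexwise_continuous_dowker_map t :
  simplexwise_continuous (@dowker_map t).
Proof. exact/simplexwise_continuous_simplicial_map/dnerve_fin. Qed.

Lemma continuous_dowker_map t : continuous (@dowker_map t).
Proof. exact/continuous_simplicial_map/dnerve_fin. Qed.

Lemma dowker_map_natural s t (i : dnerve Lam s `<=` dnerve Lam t)
    (i' : dnerve Lam' (alpha s) `<=` dnerve Lam' (alpha t)) :
  (alpha s <= alpha t)%E ->
  homotopic R (@dowker_map t \o Defs.incl i) (Defs.incl i' \o @dowker_map s).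
Proof.
move=> ast; apply: contiguous_homotopic.
- exact: dnerve_down.
- move=> s0 Ks0 s00; exists (rimage C s0); first exact: dnerve_mono ast _ (C_nerve Ks0 s00).
  move=> x sx; suff sfx : supp (push f (sval x)) `<=` rimage C s0 by rewrite setUid.
  by move=> v pv; have [u su <-] := supp_push pv; exists u => //; exact: sx.
- exact: simplexwise_continuous_push (@dnerve_fin _ _ _ Lam s) _.
- exact: simplexwise_continuous_push (@dnerve_fin _ _ _ Lam s) _.
Qed.

End DowkerMap.

Section DowkerRoundTrip.
Variables (R : realType) (L W L' W' : Type).
Variables (Lam : L -> W -> \bar R) (Lam' : L' -> W' -> \bar R).
Variables (alpha alpha' : \bar R -> \bar R).
Variables (C : L -> L' -> Prop) (C' : L' -> L -> Prop) (f : L -> L') (g : L' -> L).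
Hypothesis C_nerve : forall t s, dnerve Lam t s -> s !=set0 ->
  dnerve Lam' (alpha t) (rimage C s).
Hypothesis C'_nerve : forall t s, dnerve Lam' t s -> s !=set0 ->
  dnerve Lam (alpha' t) (rimage C' s).
Hypothesis f_in_C : forall l, C l (f l).
Hypothesis g_in_C' : forall l', C' l' (g l').
Hypothesis f_back : forall l, C' (f l) l.

Lemma dowker_map_round_trip t (i : dnerve Lam t `<=` dnerve Lam (alpha' (alpha t))) :
  homotopic R (dowker_map C'_nerve g_in_C' (t := alpha t) \o
               dowker_map C_nerve f_in_C (t := t)) (Defs.incl i).
Proof.
apply: contiguous_homotopic.
- exact: dnerve_down.
- move=> s0 Ks0 s00; have Cs0 := C_nerve Ks0 s00.
  have Cs00 : rimage C s0 !=set0.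
    by have [l sl] := s00; exists (f l), l.
  exists (rimage C' (rimage C s0)); first exact: C'_nerve Cs0 Cs00.
  move=> x sx v [pv|xv].
  + have [u pu <-] := supp_push pv; have [w xw <-] := supp_push pu.
    by exists (f w) => //; exists w => //; exact: sx.
  + by exists (f v) => //; exists v => //; exact: sx.
- apply: simplexwise_continuous_comp.
  + exact: simplexwise_continuous_dowker_map.
  + exact: contiguous_simplicial_map.
  + exact: simplexwise_continuous_dowker_map.
- exact: simplexwise_continuous_incl.
Qed.

End DowkerRoundTrip.

Theorem corollary7p13 (R : realType) (L W L' W' : Type)
  (Lam : L -> W -> \bar R) (Lam' : L' -> W' -> \bar R)
  (hLam : forall l w, (0 <= Lam l w)%E) (hLam' : forall l w, (0 <= Lam' l w)%E)
  (alpha alpha' : \bar R -> \bar R)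
  (ha : forall t, (t <= alpha t)%E) (ha' : forall t, (t <= alpha' t)%E)
  (ma : forall s t, (s <= t)%E -> (alpha s <= alpha t)%E)
  (ma' : forall s t, (s <= t)%E -> (alpha' s <= alpha' t)%E) :
  dowker_interleaved alpha alpha' Lam Lam' ->
  fc_interleaved ha ha' ma ma' (Dowker_nerve Lam) (Dowker_nerve Lam').
Proof.
move=> [C [C' [hC hC' /choice[f fC] /choice[g gC']]]].
have C_nerve t s : dnerve Lam t s -> s !=set0 -> dnerve Lam' (alpha t) (rimage C s).
  by move=> Ks s0; case: (hC t s Ks s0).
have C'_nerve t s : dnerve Lam' t s -> s !=set0 -> dnerve Lam (alpha' t) (rimage C' s).
  by move=> Ks s0; case: (hC' t s Ks s0).
have [f_in_C f_back] := (fun l => (fC l).1, fun l => (fC l).2).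
have [g_in_C' g_back] := (fun l => (gC' l).1, fun l => (gC' l).2).
exists (fun t => dowker_map C_nerve f_in_C (t := t)),
       (fun t => dowker_map C'_nerve g_in_C' (t := t)).
do 2 (split; first by move=> t; exact: continuous_dowker_map).
split=> [s t st | s t st | t | t].
- exact: dowker_map_natural (ma _ _ st).
- exact: dowker_map_natural (ma' _ _ st).
- exact: dowker_map_round_trip.
- exact: dowker_map_round_trip.
Qed.
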